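(* Let $P_\star\in\mathcal{P}$, let $P_n$ be the empirical distribution of $n$ i.i.d. draws from $P_\star$, and let $\widehat P_n\in\mathcal{P}$ be an estimate of $P_\star$ that is independent of $P_n$. Write $\pi_n=\pi_{\widehat P_n}$, $\theta_{n,a}=\theta_{\widehat P_n,a}$, $\psi_n=\psi_{\widehat P_n}$, $\phi_n=\phi_{\widehat P_n}$, and define the remainder $\mathcal{R}_n=\psi_n+\mathbb{E}_{Z\sim P_\star}[\phi_n(Z)]-\psi_\star$ (with $\widehat P_n$ held fixed in the expectation). If (i) $\|\pi_n-\pi_\star\|_{L^2(P_{\star,X})}=O_p(n^{-\tau})$ for some scalar $\tau>0$, and (ii) $\|\theta_{n,a}-\theta_{\star,a}\|_{L^2(P_{\star,X};\mathcal{H})}=O_p(n^{-\gamma_a})$ for some scalar $\gamma_a>0$, for each $a\in\{0,1\}$, then $\|\mathcal{R}_n\|_{\mathcal{H}}=O_p\big(n^{-[\tau+\min\{\gamma_1,\gamma_0\}]}\big)$. In particular, if $\tau+\min\{\gamma_1,\gamma_0\}>1/2$, then $\|\mathcal{R}_n\|_{\mathcal{H}}=o_p(n^{-1/2})$.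
   Context: $\mathcal{X},\mathcal{Y}$ Polish; $\mathcal{Z}=\mathcal{X}\times\{0,1\}\times\mathcal{Y}$, $Z=(X,A,Y)$. $\mathcal{P}$ is a dominated, locally nonparametric collection of distributions on $\mathcal{Z}$ with $P_{Y\mid A,X}$ non-degenerate and strong positivity: fixed $\eta>0$ with $\eta\le\pi_P(x)\le1-\eta$ $P_X$-a.e. for all $P\in\mathcal{P}$, where $\pi_P(x)=P(A=1\mid X=x)$. $k,\ell$ bounded characteristic kernels with feature maps $K_x,L_y$; $\mathcal{H}=\mathcal{H}_\mathcal{X}\otimes\mathcal{H}_\mathcal{Y}$ real separable tensor-product RKHS with feature map $\Lambda_{x,y}=K_x\otimes L_y$. For $P\in\mathcal{P}$: $\theta_{P,a}(x)=K_x\otimes\mathbb{E}_P[L_Y\mid A=a,X=x]$, $\psi_P=\mathbb{E}_P[\theta_{P,1}(X)-\theta_{P,0}(X)]$, $\phi_P(x,a,y)=(\frac{a}{\pi_P(x)}-\frac{1-a}{1-\pi_P(x)})(\Lambda_{x,y}-\theta_{P,a}(x))+\theta_{P,1}(x)-\theta_{P,0}(x)-\psi_P$. Subscript $\star$ denotes evaluation at $P_\star$. $\|f\|^2_{L^2(P_{\star,X})}=\int f^2dP_{\star,X}$, $\|g\|^2_{L^2(P_{\star,X};\mathcal{H})}=\int\|g(x)\|^2_{\mathcal{H}}P_{\star,X}(dx)$. *)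

From HB Require Import structures.
From mathcomp Require Import all_boot all_order all_algebra.
From mathcomp Require Import all_classical all_reals all_analysis.
From mathcomp Require Import measurable_realfun.

Set Implicit Arguments.
Unset Strict Implicit.
Unset Printing Implicit Defensive.

Import Order.TTheory GRing.Theory Num.Theory.
Local Open Scope classical_set_scope.
Local Open Scope ring_scope.

Section Hilbert.
Variables (R : realType) (H : lmodType R) (ip : H -> H -> R).

Definition hnorm (h : H) : R := Num.sqrt (ip h h).

Definition is_hilbert : Prop :=
  [/\ (forall (a : R) (u v w : H), ip (a *: u + v) w = a * ip u w + ip v w),
      (forall u v : H, ip u v = ip v u),
      (forall u : H, 0 <= ip u u),
      (forall u : H, ip u u = 0 -> u = 0) &
      (forall u : nat -> H,
         (forall e : R, 0 < e -> exists N : nat, forall m n : nat,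
            (N <= m)%N -> (N <= n)%N -> hnorm (u m - u n) < e) ->
         exists v : H, forall e : R, 0 < e -> exists N : nat,
            forall n : nat, (N <= n)%N -> hnorm (u n - v) < e)].

Definition hseparable : Prop :=
  exists e : nat -> H, forall (h : H) (eps : R), 0 < eps ->
    exists k : nat, hnorm (h - e k) < eps.

Definition dense_span (T : Type) (F : T -> H) : Prop :=
  forall (h : H) (eps : R), 0 < eps ->
    exists s : seq (R * T), hnorm (h - \sum_(p <- s) p.1 *: F p.2) < eps.

(* m is the (Pettis = Bochner, for the bounded functions used here)
   integral of f : T -> H against mu *)
Definition is_mean d (T : measurableType d) (mu : probability T R)
    (f : T -> H) (m : H) : Prop :=
  forall h : H,
    mu.-integrable setT (fun t => (ip (f t) h)%:E) /\
    (\int[mu]_t (ip (f t) h)%:E = (ip m h)%:E)%E.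

Definition hmean d (T : measurableType d) (mu : probability T R)
    (f : T -> H) : H :=
  xget 0 [set m | is_mean mu f m].

End Hilbert.

Record tensor_rkhs (R : realType) (X Y : Type)
    (HX HY H : lmodType R) := TensorRKHS {
  ipX : HX -> HX -> R;
  ipY : HY -> HY -> R;
  ipH : H -> H -> R;
  featX : X -> HX;
  featY : Y -> HY;
  tens : HX -> HY -> H
}.

Section TensorRKHS.
Variables (R : realType) (dX dY : measure_display)
  (X : measurableType dX) (Y : measurableType dY) (HX HY H : lmodType R).
Variable S : @tensor_rkhs R X Y HX HY H.

Definition kerX (x x' : X) : R := ipX S (featX S x) (featX S x').
Definition kerY (y y' : Y) : R := ipY S (featY S y) (featY S y').

Definition bounded_kernel (T : Type) (k : T -> T -> R) : Prop :=
  exists C : R, forall t : T, k t t <= C.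

Definition characteristic d (T : measurableType d) (HT : lmodType R)
    (ipT : HT -> HT -> R) (feat : T -> HT) : Prop :=
  forall (mu nu : probability T R) (m : HT),
    is_mean ipT mu feat m -> is_mean ipT nu feat m ->
    forall A : set T, measurable A -> mu A = nu A.

Definition valid_tensor_rkhs : Prop :=
  [/\
  [/\ is_hilbert (ipX S), is_hilbert (ipY S), is_hilbert (ipH S) &
      hseparable (ipH S)],
  (* H_X, H_Y are the RKHSs of k, l: the features span densely *)
  dense_span (ipX S) (featX S) /\ dense_span (ipY S) (featY S),
  (* H is the Hilbert tensor product of H_X and H_Y *)
  [/\ (forall (a : R) u u' v, tens S (a *: u + u') v
                              = a *: tens S u v + tens S u' v),
      (forall (a : R) u v v', tens S u (a *: v + v')
                              = a *: tens S u v + tens S u v'),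
      (forall u u' v v', ipH S (tens S u v) (tens S u' v')
                          = ipX S u u' * ipY S v v') &
      dense_span (ipH S) (fun p : HX * HY => tens S p.1 p.2)] &
  [/\ bounded_kernel kerX /\ bounded_kernel kerY,
      (forall x', measurable_fun setT (fun x => kerX x x')),
      (forall y', measurable_fun setT (fun y => kerY y y')),
      characteristic (ipX S) (featX S) &
      characteristic (ipY S) (featY S)]].

Definition Lambda (x : X) (y : Y) : H := tens S (featX S x) (featY S y).

(* Distributions on Z = X * {0,1} * Y, given through their               *)
(* disintegration  P = P_X (dx) . Bern(pi_P(x)) (da) . P_{Y|A=a,X=x}(dy) *)
Record dist_model := DistModel {
  margX : probability X R;
  prop : X -> R;                          (* pi_P(x) = P(A=1 | X=x) *)
  condY : bool -> X -> probability Y R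
}.

Definition wf_model (P : dist_model) : Prop :=
  [/\ measurable_fun setT (prop P),
      (forall x, 0 <= prop P x <= 1) &
      (forall (a : bool) (B : set Y), measurable B ->
         measurable_fun [set: X] (fun x : X => (condY P a x B : \bar R)))].

Definition innerZ (P : dist_model) (g : X -> bool -> Y -> R) (x : X) : R :=
  prop P x * fine (\int[condY P true x]_y (g x true y)%:E)%E
  + (1 - prop P x) * fine (\int[condY P false x]_y (g x false y)%:E)%E.

Definition is_meanZ (P : dist_model) (f : X -> bool -> Y -> H) (m : H) : Prop :=
  forall h : H,
    [/\ (forall (a : bool) (x : X),
           (condY P a x).-integrable setT (fun y => (ipH S (f x a y) h)%:E)),
        (margX P).-integrable setT
           (fun x => (innerZ P (fun x a y => ipH S (f x a y) h) x)%:E) &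
        (\int[margX P]_x (innerZ P (fun x a y => ipH S (f x a y) h) x)%:E
           = (ipH S m h)%:E)%E].

Definition hmeanZ (P : dist_model) (f : X -> bool -> Y -> H) : H :=
  xget 0 [set m | is_meanZ P f m].

Definition theta (P : dist_model) (a : bool) (x : X) : H :=
  tens S (featX S x) (hmean (ipY S) (condY P a x) (featY S)).

Definition psi (P : dist_model) : H :=
  hmean (ipH S) (margX P) (fun x => theta P true x - theta P false x).

Definition phi (P : dist_model) (x : X) (a : bool) (y : Y) : H :=
  ((a%:R / prop P x - (1 - a%:R) / (1 - prop P x)) *: (Lambda x y - theta P a x))
  + theta P true x - theta P false x - psi P.

Definition remainder (Pstar Phat : dist_model) : H :=
  psi Phat + hmeanZ Pstar (phi Phat) - psi Pstar.

End TensorRKHS.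

(* Stochastic order symbols (with outer probability, so that no         *)
(* measurability of the random quantities is presupposed).              *)
Section StochasticOrder.
Variables (R : realType) (d : measure_display) (Omega : measurableType d)
  (Pr : probability Omega R).

Definition bigOp (W : nat -> Omega -> \bar R) (r : R) : Prop :=
  forall eps : R, 0 < eps -> exists M : R, 0 < M /\
    exists N : nat, forall n : nat, (N <= n)%N ->
      exists B : set Omega, [/\ measurable B,
        [set w | ((M * (n%:R `^ (- r)))%:E < W n w)%E] `<=` B &
        (Pr B < eps%:E)%E].

Definition littleop (W : nat -> Omega -> \bar R) (r : R) : Prop :=
  forall eps delta : R, 0 < eps -> 0 < delta ->
    exists N : nat, forall n : nat, (N <= n)%N ->
      exists B : set Omega, [/\ measurable B,
        [set w | ((delta * (n%:R `^ (- r)))%:E < W n w)%E] `<=` B &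
        (Pr B < eps%:E)%E].

End StochasticOrder.

(* Every H-valued quantity is tested against a fixed h in H: the H-valued means
   are defined weakly, so the Riesz representation theorem supplies them, and the
   density of the feature spans together with the separability of H makes every
   integrand measurable.  Integrating phi_n over Y given (A, X) = (a, x) under
   P_star replaces Lambda by theta_star,a; averaging over A then gives the doubly
   robust identity
     R_n = E_star[ (pi_star - pi_n) / pi_n       (theta_star,1 - theta_n,1)
                 + (pi_star - pi_n) / (1 - pi_n) (theta_star,0 - theta_n,0) ].
   Strong positivity of pi_n bounds both weights by |pi_n - pi_star| / eta, and
   Hoelder's inequality yields
     ||R_n|| <= ||pi_n - pi_star||_2 (||theta_n,1 - theta_star,1||_2
                                      + ||theta_n,0 - theta_star,0||_2) / eta.
   Rates of O_p terms add under products and take the minimum under sums, and an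
   O_p(n^-r) term with r > 1/2 is o_p(n^-1/2). *)

From HB Require Import structures.
From mathcomp Require Import all_boot all_order all_algebra.
From mathcomp Require Import all_classical all_reals all_analysis.
From mathcomp Require Import measurable_realfun.
From mathcomp Require Import ring lra.
Import Order.TTheory GRing.Theory Num.Theory.
Import numFieldNormedType.Exports.
Local Open Scope classical_set_scope.
Local Open Scope ring_scope.
Set Implicit Arguments.
Unset Strict Implicit.
Unset Printing Implicit Defensive.

(** * Real inner product spaces *)

Section LinearFunctional.
Variables (R : realType) (V : lmodType R).

Definition linear_functional (l : V -> R) : Prop :=
  forall a u v, l (a *: u + v) = a * l u + l v.

Variable l : V -> R.
Hypothesis l_linear : linear_functional l.

Lemma linear_functional0 : l 0 = 0.
Proof. by have := l_linear 1 0 0; rewrite scale1r addr0 mul1r => h; lra. Qed.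

Lemma linear_functionalD u v : l (u + v) = l u + l v.
Proof. by have := l_linear 1 u v; rewrite scale1r mul1r. Qed.

Lemma linear_functionalZ a u : l (a *: u) = a * l u.
Proof. by rewrite -[a *: u]addr0 l_linear linear_functional0 addr0. Qed.

Lemma linear_functionalB u v : l (u - v) = l u - l v.
Proof. by rewrite linear_functionalD -scaleN1r linear_functionalZ mulN1r. Qed.

Lemma linear_functional_lincomb (I : Type) (G : I -> V) (s : seq (R * I)) :
  l (\sum_(p <- s) p.1 *: G p.2) = \sum_(p <- s) p.1 * l (G p.2).
Proof.
elim: s => [|p s IH]; first by rewrite !big_nil linear_functional0.
by rewrite !big_cons l_linear IH.
Qed.

End LinearFunctional.

Section InnerProduct.
Variables (R : realType) (V : lmodType R) (ip : V -> V -> R).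
Hypothesis ip_hilbert : is_hilbert ip.

Lemma ipC u v : ip u v = ip v u.
Proof. by case: ip_hilbert. Qed.

Lemma ip_self_ge0 u : 0 <= ip u u.
Proof. by case: ip_hilbert. Qed.

Lemma ip_self_eq0 u : ip u u = 0 -> u = 0.
Proof. by case: ip_hilbert => _ _ _ + _; apply. Qed.

Lemma ip_linear_functional w : linear_functional (ip w).
Proof. by move=> a u v; rewrite !(ipC w); case: ip_hilbert. Qed.

Lemma ip0r w : ip w 0 = 0.
Proof. exact: linear_functional0 (ip_linear_functional w). Qed.
Lemma ipDr u v w : ip w (u + v) = ip w u + ip w v.
Proof. exact: (linear_functionalD (ip_linear_functional w) u v). Qed.
Lemma ipZr a u w : ip w (a *: u) = a * ip w u.
Proof. exact: (linear_functionalZ (ip_linear_functional w) a u). Qed.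
Lemma ipBr u v w : ip w (u - v) = ip w u - ip w v.
Proof. exact: (linear_functionalB (ip_linear_functional w) u v). Qed.
Lemma ipNr u w : ip w (- u) = - ip w u.
Proof. by rewrite -sub0r ipBr ip0r sub0r. Qed.

Lemma ip0l w : ip 0 w = 0.
Proof. by rewrite ipC ip0r. Qed.
Lemma ipDl u v w : ip (u + v) w = ip u w + ip v w.
Proof. by rewrite ipC ipDr !(ipC w). Qed.
Lemma ipZl a u w : ip (a *: u) w = a * ip u w.
Proof. by rewrite ipC ipZr ipC. Qed.
Lemma ipBl u v w : ip (u - v) w = ip u w - ip v w.
Proof. by rewrite ipC ipBr !(ipC w). Qed.
Lemma ipNl u w : ip (- u) w = - ip u w.
Proof. by rewrite ipC ipNr ipC. Qed.

Lemma hnorm_ge0 u : 0 <= hnorm ip u.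
Proof. exact: sqrtr_ge0. Qed.

Lemma hnorm_sqr u : hnorm ip u ^+ 2 = ip u u.
Proof. by rewrite sqr_sqrtr // ip_self_ge0. Qed.

Lemma hnorm_lt u e : 0 < e -> (hnorm ip u < e) = (ip u u < e ^+ 2).
Proof. by move=> e0; rewrite -hnorm_sqr ltr_pXn2r // nnegrE ?hnorm_ge0 ?ltW. Qed.

Lemma cauchy_schwarz_sqr u v : ip u v ^+ 2 <= ip u u * ip v v.
Proof.
have [v0|vn0] := eqVneq (ip v v) 0.
  by rewrite (ip_self_eq0 v0) ip0r ip0l expr0n /= mulr0.
have vp : 0 < ip v v by rewrite lt0r vn0 ip_self_ge0.
set w := u - (ip u v / ip v v) *: v.
rewrite -subr_ge0; have -> : ip u u * ip v v - ip u v ^+ 2 = ip v v * ip w w.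
  by rewrite /w !ipBl !ipBr !ipZl !ipZr (ipC v u); field.
by rewrite mulr_ge0 ?ip_self_ge0 // ltW.
Qed.

Lemma cauchy_schwarz u v : `|ip u v| <= hnorm ip u * hnorm ip v.
Proof.
rewrite -(@ler_pXn2r _ 2) ?nnegrE ?mulr_ge0 ?hnorm_ge0 //.
by rewrite exprMn !hnorm_sqr real_normK ?num_real // cauchy_schwarz_sqr.
Qed.

Lemma ip_norm_le u v B : hnorm ip u <= B -> `|ip u v| <= B * hnorm ip v.
Proof. by move=> uB; rewrite (le_trans (cauchy_schwarz u v)) // ler_wpM2r ?hnorm_ge0. Qed.

Lemma hnormD_le u v : hnorm ip (u + v) <= hnorm ip u + hnorm ip v.
Proof.
rewrite -(@ler_pXn2r _ 2) ?nnegrE ?addr_ge0 ?hnorm_ge0 //.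
rewrite hnorm_sqr ipDl !ipDr sqrrD !hnorm_sqr (ipC v u).
have := le_trans (ler_norm (ip u v)) (cauchy_schwarz u v); lra.
Qed.

Lemma hnormZ a u : hnorm ip (a *: u) = `|a| * hnorm ip u.
Proof.
by rewrite /hnorm ipZl ipZr mulrA -expr2 sqrtrM ?sqr_ge0 // sqrtr_sqr.
Qed.

Lemma hnormN u : hnorm ip (- u) = hnorm ip u.
Proof. by rewrite /hnorm ipNl ipNr opprK. Qed.

Lemma hnorm_distC u v : hnorm ip (u - v) = hnorm ip (v - u).
Proof. by rewrite -hnormN opprB. Qed.

Lemma hnormB_le u v : hnorm ip (u - v) <= hnorm ip u + hnorm ip v.
Proof. by rewrite -(hnormN v) hnormD_le. Qed.

Lemma hnorm_le_of_ip_self u c :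
  0 <= c -> ip u u <= c * hnorm ip u -> hnorm ip u <= c.
Proof.
move=> c0; have [->|n0] := eqVneq (hnorm ip u) 0; first by [].
have np : 0 < hnorm ip u by rewrite lt0r n0 hnorm_ge0.
by rewrite -hnorm_sqr expr2 ler_pM2r.
Qed.

Section Riesz.
Variable l : V -> R.
Hypothesis l_linear : linear_functional l.
Variable C : R.
Hypothesis l_bounded : forall h, `|l h| <= C * hnorm ip h.

(* the minimizer of this energy is the Riesz representative of [l] *)
Let energy h := ip h h / 2 - l h.

Let l_le h : l h <= `|C| * hnorm ip h.
Proof.
apply: le_trans (ler_norm _) (le_trans (l_bounded h) _).
by rewrite ler_wpM2r ?hnorm_ge0 ?ler_norm.
Qed.

Let energy_ge h : - (`|C| ^+ 2 / 2) <= energy h.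
Proof.
rewrite /energy -hnorm_sqr; have := l_le h; have := hnorm_ge0 h.
have := sqr_ge0 (hnorm ip h - `|C|); rewrite sqrrB; nra.
Qed.

Let energy_midpoint a b :
  energy a + energy b - 2 * energy (2^-1 *: (a + b)) = ip (a - b) (a - b) / 4.
Proof.
rewrite /energy (linear_functionalZ l_linear) (linear_functionalD l_linear).
by rewrite ipZl !ipZr !ipDl !ipDr ?ipBl ?ipBr ?ipNl ?ipNr (ipC b a); field.
Qed.

Let energy_le m h : energy m <=
  energy h + hnorm ip (h - m) * ((hnorm ip (h - m) + 2 * hnorm ip m) / 2 + `|C|).
Proof.
have diff : energy m - energy h = l (h - m) - ip (h - m) (h + m) / 2.
  by rewrite /energy (linear_functionalB l_linear) ipBl !ipDr (ipC m h); field.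
have d0 := hnorm_ge0 (h - m).
have sum_le : hnorm ip (h + m) <= hnorm ip (h - m) + 2 * hnorm ip m.
  have := hnormD_le (h - m + m) m; have := hnormD_le (h - m) m.
  by rewrite subrK; lra.
have ip_ge : - (hnorm ip (h - m) * hnorm ip (h + m)) <= ip (h - m) (h + m).
  by have := cauchy_schwarz (h - m) (h + m); rewrite ler_norml => /andP[].
have := ler_wpM2l d0 sum_le; have := l_le (h - m); nra.
Qed.

Let energies := range energy.

Let energies_inf : has_inf energies.
Proof.
split; first by exists (energy 0), 0.
by exists (- (`|C| ^+ 2 / 2)) => _ [h _ <-]; exact: energy_ge.
Qed.

Let inf_le_energy h : inf energies <= energy h.
Proof. by apply: (ge_inf energies_inf.2); exists h. Qed.

Let minimizing n : exists h, energy h < inf energies + n.+1%:R^-1.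
Proof.
have pos : 0 < n.+1%:R^-1 :> R by rewrite invr_gt0.
by have [_ [h _ <-] lt] := inf_adherent pos energies_inf; exists h.
Qed.

Let inv_natS_le (m n : nat) : (n <= m)%N -> m.+1%:R^-1 <= n.+1%:R^-1 :> R.
Proof. by move=> nm; rewrite lef_pV2 ?posrE ?ltr0n // ler_nat ltnS. Qed.

Let minimizing_cauchy hs : (forall n, energy (hs n) < inf energies + n.+1%:R^-1) ->
  forall e, 0 < e -> exists N : nat, forall m n : nat,
    (N <= m)%N -> (N <= n)%N -> hnorm ip (hs m - hs n) < e.
Proof.
move=> hsP e e0.
have [N] := ltr_add_invr (divr_gt0 (exprn_gt0 2 e0) (ltr0n R 8)).
rewrite add0r => HN.
exists N => m n Nm Nn; rewrite hnorm_lt //.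
have := energy_midpoint (hs m) (hs n); have := inf_le_energy (2^-1 *: (hs m + hs n)).
have := hsP m; have := hsP n; have := inv_natS_le Nm; have := inv_natS_le Nn.
move: HN; set a := N.+1%:R^-1; set b := m.+1%:R^-1; set c := n.+1%:R^-1.
set q := ip _ _; lra.
Qed.

Let energy_minimizer : exists m, forall h, energy m <= energy h.
Proof.
have [hs hsP] := choice minimizing.
have [m Hm] : exists m, forall e, 0 < e -> exists N : nat,
    forall n : nat, (N <= n)%N -> hnorm ip (hs n - m) < e.
  by case: ip_hilbert => _ _ _ _; apply; exact: minimizing_cauchy.
exists m => h; apply: le_trans (inf_le_energy h).
apply/ler_addgt0Pr => eps eps0.
set K := (1 + 2 * hnorm ip m) / 2 + `|C|.
have K0 : 0 < K by rewrite /K; have := hnorm_ge0 m; have := normr_ge0 C; lra.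
have mK : 0 < Num.min 1 (eps / (2 * K)) by rewrite lt_min ltr01 divr_gt0 // mulr_gt0.
have [N1 HN1] := Hm _ mK.
have [N2] := ltr_add_invr (divr_gt0 eps0 (ltr0n R 2)); rewrite add0r => HN2.
pose n := maxn N1 N2.
have := HN1 n (leq_maxl _ _); rewrite lt_min => /andP[d1 d2].
have := energy_le m (hs n); have := hsP n.
have := inv_natS_le (leq_maxr N1 N2 : (N2 <= n)%N).
have dK : hnorm ip (hs n - m) * ((hnorm ip (hs n - m) + 2 * hnorm ip m) / 2 + `|C|)
    <= eps / 2.
  apply: (@le_trans _ _ (hnorm ip (hs n - m) * K)).
    by rewrite ler_wpM2l ?hnorm_ge0 // lerD2r ler_pM2r // lerD2r ltW.
  by rewrite -ler_pdivlMr // (le_trans (ltW d2)) // invfM mulrA.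
move: HN2 dK; set a := (N2.+1%:R)^-1; set b := (n.+1%:R)^-1; lra.
Qed.

Lemma riesz_representation : exists m, forall h, l h = ip m h.
Proof.
have [m min_m] := energy_minimizer; exists m => v.
(* first-order condition of the minimum along the line [m + t v] *)
apply/eqP; rewrite -subr_eq0; apply/eqP.
set a := l v - ip m v; set q := ip v v.
have q0 : 0 <= q by apply: ip_self_ge0.
set t := a / (q + 1).
have := min_m (m + t *: v).
rewrite /energy (linear_functionalD l_linear) (linear_functionalZ l_linear).
rewrite !ipDl !ipDr !ipZl !ipZr (ipC v m).
have -> : (ip m m + t * ip m v + (t * ip m v + t * (t * ip v v))) / 2 - (l m + t * l v)
  = (ip m m / 2 - l m) + (- t * a + t * t * q / 2) by rewrite /a /q; field.
rewrite lerDl => h.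
have : 0 <= - a ^+ 2 * (q / 2 + 1).
  have -> : - a ^+ 2 * (q / 2 + 1) = (- t * a + t * t * q / 2) * (q + 1) ^+ 2.
    by rewrite /t; field; rewrite gt_eqF //; lra.
  by apply: mulr_ge0 => //; exact: sqr_ge0.
rewrite mulNr oppr_ge0 pmulr_lle0; last lra.
by move=> h2; apply/eqP; rewrite -sqrf_eq0 eq_le h2 sqr_ge0.
Qed.

End Riesz.

End InnerProduct.

(** * Bounded measurable functions *)

Section BoundedMeasurable.
Context {R : realType} {d : measure_display} {T : measurableType d}.
Implicit Types (f g : T -> R).

Definition bounded_measurable f :=
  measurable_fun setT f /\ exists C, forall x, `|f x| <= C.

Lemma bounded_measurable_integrable (mu : probability T R) f :
  bounded_measurable f -> mu.-integrable setT (EFin \o f).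
Proof.
move=> [mf [C hC]]; apply: measurable_bounded_integrable => //.
  exact: (le_lt_trans (probability_le1 mu measurableT) (ltry 1)).
exists C; split; first exact: num_real.
by move=> M CM x _ /=; apply: le_trans (hC x) (ltW CM).
Qed.

Lemma bounded_measurable_cst c : bounded_measurable (fun _ => c).
Proof. by split; [exact: measurable_cst | exists `|c|]. Qed.

Lemma bounded_measurableD f g : bounded_measurable f -> bounded_measurable g ->
  bounded_measurable (fun x => f x + g x).
Proof.
move=> [mf [C hC]] [mg [D hD]]; split; first exact: measurable_funD.
by exists (C + D) => x; apply: le_trans (ler_normD _ _) (lerD (hC x) (hD x)).
Qed.

Lemma bounded_measurableN f : bounded_measurable f ->
  bounded_measurable (fun x => - f x).
Proof.
move=> [mf [C hC]]; split; first exact: measurable_funN.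
by exists C => x; rewrite normrN.
Qed.

Lemma bounded_measurableB f g : bounded_measurable f -> bounded_measurable g ->
  bounded_measurable (fun x => f x - g x).
Proof. by move=> hf hg; apply: bounded_measurableD => //; exact: bounded_measurableN. Qed.

Lemma bounded_measurableM f g : bounded_measurable f -> bounded_measurable g ->
  bounded_measurable (fun x => f x * g x).
Proof.
move=> [mf [C hC]] [mg [D hD]]; split; first exact: measurable_funM.
by exists (C * D) => x; rewrite normrM; apply: ler_pM.
Qed.

Lemma bounded_measurableZl c f : bounded_measurable f ->
  bounded_measurable (fun x => c * f x).
Proof. by apply: bounded_measurableM; exact: bounded_measurable_cst. Qed.

Section ProbabilityRintegral.
Variable mu : probability T R.

Lemma Rintegral_cst_prob c : \int[mu]_x c = c.
Proof.
rewrite Rintegral_cst // -[RHS]mulr1; congr (_ * _).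
exact: (f_equal fine (probability_setT mu)).
Qed.

Lemma bm_RintegralD f g : bounded_measurable f -> bounded_measurable g ->
  \int[mu]_x (f x + g x) = \int[mu]_x f x + \int[mu]_x g x.
Proof. by move=> hf hg; rewrite RintegralD //; exact: bounded_measurable_integrable. Qed.

Lemma bm_RintegralB f g : bounded_measurable f -> bounded_measurable g ->
  \int[mu]_x (f x - g x) = \int[mu]_x f x - \int[mu]_x g x.
Proof. by move=> hf hg; rewrite RintegralB //; exact: bounded_measurable_integrable. Qed.

Lemma bm_RintegralZl c f : bounded_measurable f ->
  \int[mu]_x (c * f x) = c * \int[mu]_x f x.
Proof. by move=> hf; rewrite RintegralZl //; exact: bounded_measurable_integrable. Qed.

Lemma bm_le_Rintegral f g : bounded_measurable f -> bounded_measurable g ->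
  (forall x, f x <= g x) -> \int[mu]_x f x <= \int[mu]_x g x.
Proof.
by move=> hf hg fg; apply: le_Rintegral => //; exact: bounded_measurable_integrable.
Qed.

Lemma bm_Rintegral_norm_le f C : bounded_measurable f ->
  (forall x, `|f x| <= C) -> `|\int[mu]_x f x| <= C.
Proof.
move=> hf hC; have [mf _] := hf.
have hnf : bounded_measurable (fun x => `|f x|).
  by split; [exact: measurableT_comp | exists C => x; rewrite normr_id].
apply: le_trans (le_normr_Rintegral _ _) _ => //.
  exact: bounded_measurable_integrable.
rewrite -[leRHS](Rintegral_cst_prob C).
by apply: bm_le_Rintegral => //; exact: bounded_measurable_cst.
Qed.

Lemma bm_integral_EFin f : bounded_measurable f ->
  (\int[mu]_x (f x)%:E = (\int[mu]_x f x)%:E)%E.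
Proof.
move=> hf; rewrite fineK //.
exact: integrable_fin_num (bounded_measurable_integrable mu hf).
Qed.

End ProbabilityRintegral.

Lemma measurable_fun_unif_approx f :
  (forall e, 0 < e -> exists g, measurable_fun setT g /\ forall x, `|f x - g x| <= e) ->
  measurable_fun setT f.
Proof.
move=> approx.
have approxS k : exists g, measurable_fun setT g /\ forall x, `|f x - g x| <= k.+1%:R^-1.
  by apply: approx; rewrite invr_gt0.
have [g hg] := choice approxS.
apply: (measurable_fun_cvg (h := g)) => [k|x _]; first by case: (hg k).
apply/cvgrPdist_le => e e0.
have [N] := ltr_add_invr e0; rewrite add0r => HN.
exists N => // k /= Nk; have [_ /(_ x)] := hg k; move/le_trans; apply.
by apply: ltW; apply: le_lt_trans HN; rewrite lef_pV2 ?posrE // ler_nat ltnS.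
Qed.

Lemma measurable_funV_ge f (e : R) : 0 < e -> (forall x, e <= f x) ->
  measurable_fun setT f -> measurable_fun setT (fun x => (f x)^-1).
Proof.
move=> e0 fe mf.
have -> : (fun x => (f x)^-1) = (fun x => (Num.max (f x) e)^-1).
  by apply: funext => x; rewrite max_l // fe.
suff mV : measurable_fun setT (fun t : R => (Num.max t e)^-1).
  exact: (measurableT_comp mV mf).
apply: nonincreasing_measurable => // a b ab.
have ha : 0 < Num.max a e by rewrite lt_max e0 orbT.
have hb : 0 < Num.max b e by rewrite lt_max e0 orbT.
by rewrite lef_pV2 ?posrE // ge_max !le_max ab lexx !orbT.
Qed.

End BoundedMeasurable.

Lemma measurable_Rintegral_kernel {R : realType} {dX dY : measure_display}
    {X : measurableType dX} {Y : measurableType dY} (k : X -> probability Y R) :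
  (forall U, measurable U -> measurable_fun setT (fun x => (k x U : \bar R))) ->
  forall g, bounded_measurable g -> measurable_fun setT (fun x => \int[k x]_y g y).
Proof.
move=> mk g hg; have [mg [C hC]] := hg.
(* shift [g] to a nonnegative integrand, to which the kernel lemma applies *)
have -> : (fun x => \int[k x]_y g y) = (fun x => fine (\int[k x]_y ((g y + C)%:E))%E - C).
  apply: funext => x; have := bm_RintegralD (k x) hg (bounded_measurable_cst C).
  by rewrite Rintegral_cst_prob /Rintegral => ->; rewrite addrK.
apply: measurable_funB; last exact: measurable_cst.
apply: measurableT_comp => //.
apply: (measurable_fun_integral_kernel (l := fun x => (k x : {measure set Y -> \bar R}))).
- exact: mk.
- by move=> y; rewrite lee_fin -lerBlDr sub0r; have := hC y; rewrite ler_norml => /andP[].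
- by apply: measurableT_comp => //; apply: measurable_funD => //; exact: measurable_cst.
Qed.

(** * Weak integrals of Hilbert-space-valued functions *)

Section WeakIntegral.
Context {R : realType} (V : lmodType R) (ip : V -> V -> R) (ip_hilbert : is_hilbert ip).
Context {d : measure_display} {T : measurableType d}.
Implicit Types (F : T -> V).

Lemma bounded_measurable_ip F B h : (forall t, hnorm ip (F t) <= B) ->
  measurable_fun setT (fun t => ip (F t) h) -> bounded_measurable (fun t => ip (F t) h).
Proof.
by move=> FB mF; split => //; exists (B * hnorm ip h) => t; exact: ip_norm_le.
Qed.

Lemma measurable_ip_dense_span (I : Type) (G : I -> V) F B :
  dense_span ip G -> (forall t, hnorm ip (F t) <= B) ->
  (forall i, measurable_fun setT (fun t => ip (F t) (G i))) ->
  forall h, measurable_fun setT (fun t => ip (F t) h).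
Proof.
move=> dG FB mG h; apply: measurable_fun_unif_approx => e e0.
set B' := `|B| + 1.
have B'0 : 0 < B' by rewrite /B'; have := normr_ge0 B; lra.
have [s hs] := dG h (e / B') (divr_gt0 e0 B'0).
exists (fun t => \sum_(p <- s) p.1 * ip (F t) (G p.2)); split.
  apply: (@measurable_sum _ _ _ _ _ _ (fun p t => p.1 * ip (F t) (G p.2))) => p.
  by apply: measurable_funM; [exact: measurable_cst | exact: mG].
move=> t; rewrite -(linear_functional_lincomb (ip_linear_functional ip_hilbert (F t))).
rewrite -(ipBr ip_hilbert).
have FB' : hnorm ip (F t) <= B'.
  by rewrite (le_trans (FB t)) // /B'; have := ler_norm B; lra.
apply: le_trans (ip_norm_le ip_hilbert _ FB') _.
rewrite -ler_pdivlMl // mulrC; exact: ltW.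
Qed.

Lemma linear_functional_eq0_dense_span (I : Type) (G : I -> V) l C :
  dense_span ip G -> linear_functional l -> (forall h, `|l h| <= C * hnorm ip h) ->
  (forall i, l (G i) = 0) -> forall h, l h = 0.
Proof.
move=> dG l_lin l_bd lG h; apply/eqP; rewrite -normr_le0; apply/ler_addgt0Pr => e e0.
rewrite add0r; set K := `|C| + 1.
have K0 : 0 < K by rewrite /K; have := normr_ge0 C; lra.
have [s hs] := dG h (e / K) (divr_gt0 e0 K0).
have l_span : l (\sum_(p <- s) p.1 *: G p.2) = 0.
  by rewrite (linear_functional_lincomb l_lin) big1 // => p _; rewrite lG mulr0.
have -> : l h = l (h - \sum_(p <- s) p.1 *: G p.2).
  by rewrite (linear_functionalB l_lin) l_span subr0.
have n0 : 0 <= hnorm ip (h - \sum_(p <- s) p.1 *: G p.2) by exact: hnorm_ge0.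
apply: le_trans (l_bd _) _.
apply: (@le_trans _ _ (K * hnorm ip (h - \sum_(p <- s) p.1 *: G p.2))).
  by rewrite ler_wpM2r // /K; have := ler_norm C; lra.
by rewrite -ler_pdivlMl // mulrC ltW.
Qed.

Lemma hmeanE (mu : probability T R) F B :
  (forall t, hnorm ip (F t) <= B) ->
  (forall h, measurable_fun setT (fun t => ip (F t) h)) ->
  forall h, ip (hmean ip mu F) h = \int[mu]_t ip (F t) h.
Proof.
move=> FB mF w.
have bF h : bounded_measurable (fun t => ip (F t) h) by exact: bounded_measurable_ip.
pose l h := \int[mu]_t ip (F t) h.
have l_lin : linear_functional l.
  move=> a u v; rewrite /l -bm_RintegralZl // -bm_RintegralD //.
    by apply: eq_Rintegral => t _; rewrite (ipDr ip_hilbert) (ipZr ip_hilbert).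
  exact: bounded_measurableZl.
have l_bd h : `|l h| <= B * hnorm ip h.
  by apply: bm_Rintegral_norm_le => // t; exact: ip_norm_le.
have [m hm] := riesz_representation ip_hilbert l_lin l_bd.
have m_mean : is_mean ip mu F m.
  move=> h; split; first exact: bounded_measurable_integrable.
  by rewrite bm_integral_EFin // -hm.
have [_] := xgetPex 0 (ex_intro _ m m_mean : exists m, [set m | is_mean ip mu F m] m) w.
by rewrite bm_integral_EFin // => -[].
Qed.

Lemma hnorm_le_weak_integral (mu : probability T R) F (g : T -> R) m :
  (forall h, ip m h = \int[mu]_t ip (F t) h) ->
  bounded_measurable (fun t => ip (F t) m) -> bounded_measurable g ->
  (forall t, hnorm ip (F t) <= g t) -> hnorm ip m <= \int[mu]_t g t.
Proof.
move=> mE bFm bg Fg.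
apply: (hnorm_le_of_ip_self ip_hilbert).
  by apply: Rintegral_ge0 => t _; exact: le_trans (hnorm_ge0 _ _) (Fg t).
rewrite mE mulrC -bm_RintegralZl //; apply: bm_le_Rintegral => //.
  exact: bounded_measurableZl.
move=> t; rewrite mulrC; apply: le_trans (ler_norm _) _.
exact: (ip_norm_le ip_hilbert m (Fg t)).
Qed.

Lemma ip_self_ge_secant u w : 2 * ip u w - ip w w <= ip u u.
Proof.
have := ip_self_ge0 ip_hilbert (u - w).
by rewrite !(ipBl ip_hilbert) !(ipBr ip_hilbert) (ipC ip_hilbert w u); lra.
Qed.

Lemma ip_self_sups (e : nat -> V) u :
  (forall h eps, 0 < eps -> exists k, hnorm ip (h - e k) < eps) ->
  ip u u = sups (fun j => 2 * ip u (e j) - ip (e j) (e j)) 0%N.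
Proof.
move=> e_dense; set term := fun j => _.
have ne : sdrop term 0 !=set0 by exists (term 0%N), 0%N.
have ub : ubound (sdrop term 0) (ip u u).
  by move=> _ [j _ <-]; exact: ip_self_ge_secant.
rewrite /sups /=; apply/eqP; rewrite eq_le ge_sup //= andbT.
apply/ler_addgt0Pr => eps eps0.
have s0 : 0 < Num.sqrt eps by rewrite sqrtr_gt0.
have [j] := e_dense u _ s0.
rewrite hnorm_lt // sqr_sqrtr ?(ltW eps0) // => hj.
have : term j <= sup (sdrop term 0).
  by apply: sup_upper_bound; [split; last exists (ip u u) | exists j].
rewrite /term; move: hj.
by rewrite !(ipBl ip_hilbert) !(ipBr ip_hilbert) (ipC ip_hilbert (e j) u); lra.
Qed.

Lemma measurable_hnorm F : hseparable ip ->
  (forall h, measurable_fun setT (fun t => ip (F t) h)) ->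
  measurable_fun setT (fun t => hnorm ip (F t)).
Proof.
move=> [e e_dense] mF; apply: measurableT_comp.
  by apply: nondecreasing_measurable => // a b; exact: ler_wsqrtr.
rewrite (_ : (fun t => ip (F t) (F t)) = fun t =>
    sups (fun j => 2 * ip (F t) (e j) - ip (e j) (e j)) 0%N); last first.
  by apply: funext => t; exact: ip_self_sups.
apply: measurable_fun_sups => [t _|j].
  by exists (ip (F t) (F t)) => _ [j _ <-]; exact: ip_self_ge_secant.
apply: measurable_funB; last exact: measurable_cst.
by apply: measurable_funM; [exact: measurable_cst | exact: mF].
Qed.

End WeakIntegral.

(** * The remainder of the one-step estimator *)

Section Model.
Variables (R : realType) (dX dY : measure_display)
  (X : measurableType dX) (Y : measurableType dY) (HX HY H : lmodType R)
  (S : @tensor_rkhs R X Y HX HY H).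
Hypotheses (hX : is_hilbert (ipX S)) (hY : is_hilbert (ipY S)) (hH : is_hilbert (ipH S)).
Hypotheses (dnX : dense_span (ipX S) (featX S)) (dnY : dense_span (ipY S) (featY S)).
Hypothesis dnT : dense_span (ipH S) (fun p : HX * HY => tens S p.1 p.2).
Hypothesis ip_tens :
  forall u u' v v', ipH S (tens S u v) (tens S u' v') = ipX S u u' * ipY S v v'.
Variables (CX CY : R).
Hypotheses (kX_le : forall x, kerX S x x <= CX) (kY_le : forall y, kerY S y y <= CY).
Hypotheses (mkX : forall x', measurable_fun setT (fun x => kerX S x x'))
           (mkY : forall y', measurable_fun setT (fun y => kerY S y y')).

Local Notation DM := (@dist_model R dX dY X Y).
Local Notation kmeY nu := (hmean (ipY S) nu (featY S)).

Let BX := Num.sqrt CX.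
Let BY := Num.sqrt CY.
Let BB := BX * BY.

Let hnorm_featX_le x : hnorm (ipX S) (featX S x) <= BX.
Proof. exact: ler_wsqrtr (kX_le x). Qed.
Let hnorm_featY_le y : hnorm (ipY S) (featY S y) <= BY.
Proof. exact: ler_wsqrtr (kY_le y). Qed.

Let measurable_ip_featX u : measurable_fun setT (fun x => ipX S (featX S x) u).
Proof. exact: (measurable_ip_dense_span hX dnX hnorm_featX_le mkX). Qed.
Let measurable_ip_featY v : measurable_fun setT (fun y => ipY S (featY S y) v).
Proof. exact: (measurable_ip_dense_span hY dnY hnorm_featY_le mkY). Qed.

Let bounded_measurable_ip_featY v : bounded_measurable (fun y => ipY S (featY S y) v).
Proof. exact: (bounded_measurable_ip hY hnorm_featY_le (measurable_ip_featY v)). Qed.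

Lemma kmeYE (nu : probability Y R) v :
  ipY S (kmeY nu) v = \int[nu]_y ipY S (featY S y) v.
Proof. exact: (hmeanE hY nu hnorm_featY_le measurable_ip_featY v). Qed.

Lemma hnorm_kmeY_le nu : hnorm (ipY S) (kmeY nu) <= BY.
Proof.
rewrite -[BY](Rintegral_cst_prob nu).
exact: (hnorm_le_weak_integral hY (kmeYE nu) (bounded_measurable_ip_featY _)
  (bounded_measurable_cst _) hnorm_featY_le).
Qed.

Lemma hnorm_tens u v : hnorm (ipH S) (tens S u v) = hnorm (ipX S) u * hnorm (ipY S) v.
Proof. by rewrite /hnorm ip_tens sqrtrM // ip_self_ge0. Qed.

Lemma hnorm_theta_le (P : DM) a x : hnorm (ipH S) (theta S P a x) <= BB.
Proof.
by rewrite /theta hnorm_tens ler_pM ?hnorm_ge0 ?hnorm_kmeY_le.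
Qed.

Lemma hnorm_thetaB_le (P Q : DM) a b x y :
  hnorm (ipH S) (theta S P a x - theta S Q b y) <= BB + BB.
Proof. by rewrite (le_trans (hnormB_le hH _ _)) // lerD ?hnorm_theta_le. Qed.

Lemma hnorm_Lambda_le x y : hnorm (ipH S) (Lambda S x y) <= BB.
Proof. by rewrite /Lambda hnorm_tens ler_pM ?hnorm_ge0. Qed.

Lemma measurable_ip_theta (P : DM) a h : wf_model P ->
  measurable_fun setT (fun x => ipH S (theta S P a x) h).
Proof.
case=> _ _ mcond; apply: (measurable_ip_dense_span hH dnT (hnorm_theta_le P a)) => p.
rewrite /theta; under eq_fun do rewrite ip_tens.
apply: measurable_funM; first exact: measurable_ip_featX.
under eq_fun do rewrite kmeYE.
by apply: measurable_Rintegral_kernel => // U mU; exact: mcond.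
Qed.

Lemma measurable_ip_Lambda x h : measurable_fun setT (fun y => ipH S (Lambda S x y) h).
Proof.
apply: (measurable_ip_dense_span hH dnT (hnorm_Lambda_le x)) => p.
rewrite /Lambda; under eq_fun do rewrite ip_tens.
by apply: measurable_funM; [exact: measurable_cst | exact: measurable_ip_featY].
Qed.

Let bounded_measurable_ip_Lambda x h :
  bounded_measurable (fun y => ipH S (Lambda S x y) h).
Proof.
exact: (bounded_measurable_ip hH (hnorm_Lambda_le x) (measurable_ip_Lambda x h)).
Qed.

Lemma Rintegral_ip_Lambda (P : DM) a x h :
  \int[condY P a x]_y ipH S (Lambda S x y) h = ipH S (theta S P a x) h.
Proof.
set nu := condY P a x.
pose l k := \int[nu]_y ipH S (Lambda S x y) k - ipH S (theta S P a x) k.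
suff : l h = 0 by move/eqP; rewrite subr_eq0 => /eqP.
apply: (linear_functional_eq0_dense_span (C := BB + BB) dnT) => [c u v|h'|p].
- rewrite /l; under eq_Rintegral do rewrite (ipDr hH) (ipZr hH).
  rewrite bm_RintegralD ?bm_RintegralZl //; last exact: bounded_measurableZl.
  by rewrite (ipDr hH) (ipZr hH); ring.
- rewrite mulrDl; apply: le_trans (ler_normB _ _) (lerD _ _).
    by apply: bm_Rintegral_norm_le => // y; exact: ip_norm_le (hnorm_Lambda_le x y).
  exact: ip_norm_le (hnorm_theta_le P a x).
- rewrite /l /Lambda /theta; under eq_Rintegral do rewrite ip_tens.
  by rewrite bm_RintegralZl // ip_tens kmeYE subrr.
Qed.

Lemma psiE (P : DM) h : wf_model P ->
  ipH S (psi S P) h = \int[margX P]_x ipH S (theta S P true x - theta S P false x) h.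
Proof.
move=> wf; apply: (hmeanE hH _ (fun x => hnorm_thetaB_le P P true false x x)) => h'.
under eq_fun do rewrite (ipBl hH).
by apply: measurable_funB; exact: measurable_ip_theta.
Qed.

Definition ipw (P : DM) (a : bool) x : R := a%:R / prop P x - (1 - a%:R) / (1 - prop P x).

Section Remainder.
Hypothesis sepH : hseparable (ipH S).
Variables (Pstar Pn : DM) (eta : R).
Hypotheses (eta_gt0 : 0 < eta) (wfS : wf_model Pstar) (wfN : wf_model Pn).
Hypothesis propN_bounds : forall x, eta <= prop Pn x <= 1 - eta.

Local Notation pS := (prop Pstar).
Local Notation pN := (prop Pn).
Local Notation thS := (theta S Pstar).
Local Notation thN := (theta S Pn).
Local Notation L2norm f := ('N[margX Pstar]_(2%:E)[EFin \o f%R])%E.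

Let pN_ge x : eta <= pN x.
Proof. by case/andP: (propN_bounds x). Qed.
Let pNC_ge x : eta <= 1 - pN x.
Proof. by case/andP: (propN_bounds x) => _; rewrite lerBrDr addrC -lerBrDr. Qed.
Let pN_gt0 x : 0 < pN x.
Proof. exact: lt_le_trans eta_gt0 (pN_ge x). Qed.
Let pNC_gt0 x : 0 < 1 - pN x.
Proof. exact: lt_le_trans eta_gt0 (pNC_ge x). Qed.
Let pS_ge0 x : 0 <= pS x.
Proof. by case: wfS => _ /(_ x) /andP[]. Qed.
Let pSC_ge0 x : 0 <= 1 - pS x.
Proof. by case: wfS => _ /(_ x) /andP[_]; rewrite subr_ge0. Qed.
Let measurable_pN : measurable_fun setT pN.
Proof. by case: wfN. Qed.
Let measurable_pS : measurable_fun setT pS.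
Proof. by case: wfS. Qed.

Lemma ipw_bound a x : `|ipw Pn a x| <= eta^-1.
Proof.
rewrite /ipw; case: a => /=.
  rewrite subrr mul0r subr0 mul1r ger0_norm ?invr_ge0 ?(ltW (pN_gt0 x)) //.
  by rewrite lef_pV2 ?posrE.
rewrite mul0r sub0r subr0 mul1r normrN ger0_norm ?invr_ge0 ?(ltW (pNC_gt0 x)) //.
by rewrite lef_pV2 ?posrE.
Qed.

Lemma measurable_ipw a : measurable_fun setT (ipw Pn a).
Proof.
apply: measurable_funB; apply: measurable_funM; try exact: measurable_cst.
  exact: measurable_funV_ge eta_gt0 pN_ge measurable_pN.
apply: measurable_funV_ge eta_gt0 pNC_ge _.
by apply: measurable_funB => //; exact: measurable_cst.
Qed.

Let centered_plugin x := thN true x - thN false x - psi S Pn.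

Let ip_centered_pluginE x h : ipH S (centered_plugin x) h =
  ipH S (thN true x) h - ipH S (thN false x) h - ipH S (psi S Pn) h.
Proof. by rewrite /centered_plugin !(ipBl hH). Qed.

Let measurable_ip_centered_plugin h :
  measurable_fun setT (fun x => ipH S (centered_plugin x) h).
Proof.
under eq_fun do rewrite ip_centered_pluginE.
by apply: measurable_funB; [apply: measurable_funB|]; try exact: measurable_cst;
  exact: measurable_ip_theta.
Qed.

Lemma ip_phi x a y h : ipH S (phi S Pn x a y) h =
  ipw Pn a x * (ipH S (Lambda S x y) h - ipH S (thN a x) h)
  + ipH S (centered_plugin x) h.
Proof.
by rewrite /phi /ipw /centered_plugin !(ipBl hH) (ipDl hH) (ipZl hH) !(ipBl hH); ring.
Qed.

Lemma Rintegral_ip_phi a x h :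
  \int[condY Pstar a x]_y ipH S (phi S Pn x a y) h =
  ipw Pn a x * (ipH S (thS a x) h - ipH S (thN a x) h)
  + ipH S (centered_plugin x) h.
Proof.
under eq_Rintegral do rewrite ip_phi.
have bc c : bounded_measurable (fun _ : Y => c) by exact: bounded_measurable_cst.
have bLc : bounded_measurable (fun y => ipH S (Lambda S x y) h - ipH S (thN a x) h).
  by apply: bounded_measurableB; [exact: bounded_measurable_ip_Lambda | exact: bc].
rewrite bm_RintegralD ?bm_RintegralZl ?bm_RintegralB ?Rintegral_cst_prob //.
  by rewrite Rintegral_ip_Lambda.
exact: bounded_measurableZl.
Qed.

Definition cond_mean_phi x :=
  pS x *: (ipw Pn true x *: (thS true x - thN true x) + centered_plugin x)
  + (1 - pS x) *: (ipw Pn false x *: (thS false x - thN false x) + centered_plugin x).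

Lemma ip_cond_mean_phi x h : ipH S (cond_mean_phi x) h =
  pS x * (ipw Pn true x * (ipH S (thS true x) h - ipH S (thN true x) h)
          + ipH S (centered_plugin x) h)
  + (1 - pS x) *
    (ipw Pn false x * (ipH S (thS false x) h - ipH S (thN false x) h)
     + ipH S (centered_plugin x) h).
Proof.
by rewrite /cond_mean_phi !(ipDl hH) !(ipZl hH) !(ipDl hH) !(ipZl hH) !(ipBl hH).
Qed.

Lemma innerZ_ip_phi x h :
  innerZ Pstar (fun x a y => ipH S (phi S Pn x a y) h) x = ipH S (cond_mean_phi x) h.
Proof.
rewrite /innerZ ip_cond_mean_phi.
by have := Rintegral_ip_phi true x h; have := Rintegral_ip_phi false x h;
  rewrite /Rintegral => -> ->.
Qed.

Lemma measurable_ip_cond_mean_phi h :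
  measurable_fun setT (fun x => ipH S (cond_mean_phi x) h).
Proof.
under eq_fun do rewrite ip_cond_mean_phi.
have mU a : measurable_fun setT (fun x => ipw Pn a x *
    (ipH S (thS a x) h - ipH S (thN a x) h) + ipH S (centered_plugin x) h).
  apply: measurable_funD; last exact: measurable_ip_centered_plugin.
  apply: measurable_funM; first exact: measurable_ipw.
  by apply: measurable_funB; exact: measurable_ip_theta.
apply: measurable_funD; apply: measurable_funM; try exact: mU.
  exact: measurable_pS.
by apply: measurable_funB; [exact: measurable_cst | exact: measurable_pS].
Qed.

Let bound_phi := eta^-1 * (BB + BB) + (BB + BB + hnorm (ipH S) (psi S Pn)).

Lemma hnorm_cond_mean_phi_le x : hnorm (ipH S) (cond_mean_phi x) <= bound_phi.
Proof.
have U_le a :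
    hnorm (ipH S) (ipw Pn a x *: (thS a x - thN a x) + centered_plugin x) <= bound_phi.
  rewrite (le_trans (hnormD_le hH _ _)) // (hnormZ hH) lerD //.
    by rewrite ler_pM ?normr_ge0 ?hnorm_ge0 ?ipw_bound ?hnorm_thetaB_le.
  by rewrite /centered_plugin (le_trans (hnormB_le hH _ _)) // lerD2r hnorm_thetaB_le.
rewrite (le_trans (hnormD_le hH _ _)) // !(hnormZ hH) !ger0_norm //.
have := ler_wpM2l (pS_ge0 x) (U_le true); have := ler_wpM2l (pSC_ge0 x) (U_le false).
lra.
Qed.

Let bounded_measurable_ip_cond_mean_phi h :
  bounded_measurable (fun x => ipH S (cond_mean_phi x) h).
Proof.
exact: (bounded_measurable_ip hH hnorm_cond_mean_phi_le (measurable_ip_cond_mean_phi h)).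
Qed.

Lemma hmeanZ_phiE h : ipH S (hmeanZ S Pstar (phi S Pn)) h =
  \int[margX Pstar]_x ipH S (cond_mean_phi x) h.
Proof.
have mE := hmeanE hH (margX Pstar) hnorm_cond_mean_phi_le measurable_ip_cond_mean_phi.
have innerZE h' : (fun x => (innerZ Pstar (fun x a y => ipH S (phi S Pn x a y) h') x)%:E)
    = (fun x => (ipH S (cond_mean_phi x) h')%:E).
  by apply: funext => x; rewrite innerZ_ip_phi.
have m_mean : is_meanZ S Pstar (phi S Pn) (hmean (ipH S) (margX Pstar) cond_mean_phi).
  move=> h'; split.
  - move=> a x; apply: bounded_measurable_integrable.
    under eq_fun do rewrite ip_phi.
    apply: bounded_measurableD; last exact: bounded_measurable_cst.
    apply: bounded_measurableZl; apply: bounded_measurableB => //.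
    exact: bounded_measurable_cst.
  - by rewrite innerZE; exact: bounded_measurable_integrable.
  - by rewrite innerZE bm_integral_EFin // mE.
have [_ _] := xgetPex 0
  (ex_intro _ _ m_mean : exists m, [set m | is_meanZ S Pstar (phi S Pn) m] m) h.
by rewrite innerZE bm_integral_EFin // => -[].
Qed.

Definition remainder_integrand x :=
  ((pS x - pN x) / pN x) *: (thS true x - thN true x)
  + ((pS x - pN x) / (1 - pN x)) *: (thS false x - thN false x).

Lemma ip_remainder_integrand x h : ipH S (remainder_integrand x) h =
  ipH S (psi S Pn) h + ipH S (cond_mean_phi x) h - ipH S (thS true x - thS false x) h.
Proof.
rewrite ip_cond_mean_phi ip_centered_pluginE /remainder_integrand /ipw /=.
rewrite !(ipDl hH) ?(ipNl hH) !(ipZl hH) !(ipBl hH).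
rewrite subrr !mul0r subr0 !mul1r sub0r subr0.
by field; rewrite !gt_eqF ?pN_gt0 ?pNC_gt0.
Qed.

Let bounded_measurable_ip_thetaS h :
  bounded_measurable (fun x => ipH S (thS true x - thS false x) h).
Proof.
apply: (bounded_measurable_ip hH (fun x => hnorm_thetaB_le Pstar Pstar true false x x)).
under eq_fun do rewrite (ipBl hH).
by apply: measurable_funB; exact: measurable_ip_theta.
Qed.

Let bounded_measurable_ip_psi_cond_mean_phi h :
  bounded_measurable (fun x => ipH S (psi S Pn) h + ipH S (cond_mean_phi x) h).
Proof.
apply: bounded_measurableD; first exact: bounded_measurable_cst.
exact: bounded_measurable_ip_cond_mean_phi.
Qed.

Let bounded_measurable_ip_remainder_integrand h :
  bounded_measurable (fun x => ipH S (remainder_integrand x) h).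
Proof.
under eq_fun do rewrite ip_remainder_integrand.
apply: bounded_measurableB; first exact: bounded_measurable_ip_psi_cond_mean_phi.
exact: bounded_measurable_ip_thetaS.
Qed.

Lemma remainderE h : ipH S (remainder S Pstar Pn) h =
  \int[margX Pstar]_x ipH S (remainder_integrand x) h.
Proof.
under eq_Rintegral do rewrite ip_remainder_integrand.
rewrite bm_RintegralB ?bm_RintegralD ?Rintegral_cst_prob.
- by rewrite /remainder (ipBl hH) (ipDl hH) hmeanZ_phiE (psiE _ wfS).
- exact: bounded_measurable_cst.
- exact: bounded_measurable_ip_cond_mean_phi.
- exact: bounded_measurable_ip_psi_cond_mean_phi.
- exact: bounded_measurable_ip_thetaS.
Qed.

Let err_prod a x := `|pN x - pS x| * hnorm (ipH S) (thN a x - thS a x).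

Lemma hnorm_remainder_integrand_le x :
  hnorm (ipH S) (remainder_integrand x) <= eta^-1 * (err_prod true x + err_prod false x).
Proof.
have w_le p : 0 < p -> eta <= p -> `|(pS x - pN x) / p| <= eta^-1 * `|pN x - pS x|.
  move=> p0 ep; rewrite normrM mulrC distrC ler_wpM2r // ger0_norm; last first.
    by rewrite invr_ge0 ltW.
  by rewrite lef_pV2 ?posrE.
rewrite mulrDr (le_trans (hnormD_le hH _ _)) // !(hnormZ hH) /err_prod !mulrA.
rewrite !(hnorm_distC hH (thS _ x)).
by rewrite lerD // ler_wpM2r ?hnorm_ge0 // w_le.
Qed.

Let measurable_hnorm_thetaB a :
  measurable_fun setT (fun x => hnorm (ipH S) (thN a x - thS a x)).
Proof.
apply: (measurable_hnorm hH sepH) => h; under eq_fun do rewrite (ipBl hH).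
by apply: measurable_funB; exact: measurable_ip_theta.
Qed.

Let bounded_measurable_err_prod a : bounded_measurable (err_prod a).
Proof.
split.
  apply: measurable_funM => //.
  by apply: measurableT_comp => //; exact: measurable_funB.
have p_le (P : DM) y : wf_model P -> `|prop P y| <= 1.
  by case=> _ /(_ y) /andP[p0 p1] _; rewrite ger0_norm.
exists ((1 + 1) * (BB + BB)) => x; rewrite /err_prod normrM normr_id.
rewrite ler_pM ?normr_ge0 //.
  by rewrite (le_trans (ler_normB _ _)) // lerD ?p_le.
by rewrite ger0_norm ?hnorm_ge0 // hnorm_thetaB_le.
Qed.

Lemma hnorm_remainder_le : hnorm (ipH S) (remainder S Pstar Pn) <=
  eta^-1 * (\int[margX Pstar]_x err_prod true x + \int[margX Pstar]_x err_prod false x).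
Proof.
have bD := bounded_measurable_err_prod.
rewrite -bm_RintegralD // -bm_RintegralZl; last exact: bounded_measurableD.
apply: (hnorm_le_weak_integral hH remainderE
  (bounded_measurable_ip_remainder_integrand _) _ hnorm_remainder_integrand_le).
by apply: bounded_measurableZl; exact: bounded_measurableD.
Qed.

Lemma Rintegral_err_prod_le_L2norm a : ((\int[margX Pstar]_x err_prod a x)%:E <=
  L2norm (fun x => pN x - pS x) * L2norm (fun x => hnorm (ipH S) (thN a x - thS a x)))%E.
Proof.
have mpB : measurable_fun setT (fun x => (pN x - pS x)%R) by exact: measurable_funB.
have two : (2 : R)^-1 + 2^-1 = 1 by rewrite [in RHS](splitr 1) mul1r.
have := hoelder (margX Pstar) mpB (measurable_hnorm_thetaB a) (ltr0n R 2) (ltr0n R 2) two.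
rewrite Lnorm1; apply: le_trans; rewrite -bm_integral_EFin //.
apply: ge0_le_integral => //.
- by move=> x _; rewrite lee_fin /err_prod mulr_ge0 ?normr_ge0 ?hnorm_ge0.
- by apply: measurableT_comp => //; case: (bounded_measurable_err_prod a).
- by do 2 apply: measurableT_comp => //; exact: measurable_funM.
- by move=> x _ /=; rewrite lee_fin /err_prod normrM [`|hnorm _ _|]ger0_norm ?hnorm_ge0.
Qed.

Lemma hnorm_remainder_le_L2norm : ((hnorm (ipH S) (remainder S Pstar Pn))%:E <=
  (eta^-1)%:E *
  (L2norm (fun x => pN x - pS x) *
     L2norm (fun x => hnorm (ipH S) (thN true x - thS true x)) +
   L2norm (fun x => pN x - pS x) *
     L2norm (fun x => hnorm (ipH S) (thN false x - thS false x))))%E.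
Proof.
apply: le_trans (_ : _ <= (eta^-1)%:E * ((\int[margX Pstar]_x err_prod true x)%:E
  + (\int[margX Pstar]_x err_prod false x)%:E))%E _.
  by rewrite -EFinD -EFinM lee_fin hnorm_remainder_le.
apply: lee_wpmul2l; first by rewrite lee_fin invr_ge0 ltW.
by apply: leeD; exact: Rintegral_err_prod_le_L2norm.
Qed.

End Remainder.

End Model.

(** * Stochastic order symbols *)

Section StochasticOrder.
Context {R : realType} {d : measure_display} {Omega : measurableType d}
  (Pr : probability Omega R).
Local Open Scope ereal_scope.
Implicit Types (U V W : nat -> Omega -> \bar R) (r s : R).

Lemma powR_natD (n : nat) r s : (1 <= n)%N ->
  (n%:R `^ (r + s) = n%:R `^ r * n%:R `^ s)%R.
Proof. by move=> n1; rewrite powRD // pnatr_eq0 -lt0n n1 implybT. Qed.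

Lemma powR_nat_le (n : nat) r s : (1 <= n)%N -> (r <= s)%R ->
  (n%:R `^ r <= n%:R `^ s)%R.
Proof. by move=> n1 rs; apply: ler_powR => //; rewrite ler1n. Qed.

Let le_outside (F : Omega -> \bar R) (a : R) (B : set Omega) w :
  [set w | a%:E < F w] `<=` B -> ~ B w -> F w <= a%:E.
Proof. by move=> sub nB; rewrite leNgt; apply/negP => /sub. Qed.

Lemma bigOp_le U W (c r : R) : (0 < c)%R -> (forall n w, W n w <= c%:E * U n w) ->
  bigOp Pr U r -> bigOp Pr W r.
Proof.
move=> c0 WU hU eps /hU[M [M0 [N HN]]].
exists (c * M)%R; split; first exact: mulr_gt0.
exists N => n /HN[B [mB sB PB]]; exists B; split => // w /= hw.
have [//|nB] := pselect (B w).
move: hw; rewrite ltNge (le_trans (WU n w)) // -mulrA EFinM.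
by apply: lee_wpmul2l; [rewrite lee_fin ltW | exact: le_outside sB nB].
Qed.

(* the two exceptional events of probability [< eps / 2] are merged into one *)
Lemma bigOp_combine U V W r s (q : R) (F : R -> R -> R) :
  (forall M1 M2, 0 < M1 -> 0 < M2 -> 0 < F M1 M2)%R ->
  (forall n w M1 M2, (0 < M1)%R -> (0 < M2)%R -> (1 <= n)%N ->
    U n w <= (M1 * n%:R `^ (- r))%:E -> V n w <= (M2 * n%:R `^ (- s))%:E ->
    W n w <= (F M1 M2 * n%:R `^ (- q))%:E) ->
  bigOp Pr U r -> bigOp Pr V s -> bigOp Pr W q.
Proof.
move=> F0 UVW hU hV eps eps0.
have e2 : (0 < eps / 2)%R by rewrite divr_gt0.
have [M1 [M10 [N1 HN1]]] := hU _ e2.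
have [M2 [M20 [N2 HN2]]] := hV _ e2.
exists (F M1 M2); split; first exact: F0.
exists (maxn 1 (maxn N1 N2)) => n; rewrite !geq_max => /and3P[n1 nN1 nN2].
have [B1 [mB1 sB1 PB1]] := HN1 n nN1.
have [B2 [mB2 sB2 PB2]] := HN2 n nN2.
exists (B1 `|` B2); split; first exact: measurableU.
- move=> w /= hw; have [|nB1] := pselect (B1 w); first by left.
  have [|nB2] := pselect (B2 w); first by right.
  move: hw; rewrite ltNge.
  by rewrite (UVW _ _ _ _ M10 M20 n1 (le_outside sB1 nB1) (le_outside sB2 nB2)).
- apply: le_lt_trans (measureU2 _ _ _) _ => //.
  by rewrite [eps](splitr eps) EFinD lteD.
Qed.

Lemma bigOp_mul U V r s : (forall n w, 0 <= U n w) -> (forall n w, 0 <= V n w) ->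
  bigOp Pr U r -> bigOp Pr V s -> bigOp Pr (fun n w => U n w * V n w) (r + s).
Proof.
move=> U0 V0; apply: bigOp_combine => [M1 M2|n w M1 M2 _ _ n1 hU hV].
  exact: mulr_gt0.
rewrite opprD powR_natD // mulrACA EFinM.
by rewrite (le_trans (lee_pmul _ _ hU hV)) ?EFinM.
Qed.

Lemma bigOp_add U V r s :
  bigOp Pr U r -> bigOp Pr V s -> bigOp Pr (fun n w => U n w + V n w) (Num.min r s).
Proof.
apply: bigOp_combine => [M1 M2|n w M1 M2 M10 M20 n1 hU hV]; first exact: addr_gt0.
have t_le t : (Num.min r s <= t)%R ->
    (n%:R `^ (- t) <= n%:R `^ (- Num.min r s))%R.
  by move=> mt; apply: powR_nat_le => //; rewrite lerN2.
rewrite (le_trans (leeD hU hV)) // -EFinD lee_fin mulrDl.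
by rewrite lerD // ler_wpM2l ?(ltW M10) ?(ltW M20) // t_le // ge_min lexx ?orbT.
Qed.

Lemma bigOp_littleop W r s : (s < r)%R -> bigOp Pr W r -> littleop Pr W s.
Proof.
move=> sr hW eps delta e0 d0.
have [M [M0 [N HN]]] := hW eps e0.
set K := ((M / delta) `^ (r - s)^-1)%R.
exists (maxn N (Num.truncn K).+1) => n; rewrite geq_max => /andP[nN nK].
have [B [mB sB PB]] := HN n nN.
exists B; split => // w /= hw; apply: sB => /=; apply: le_lt_trans hw.
have n1 : (1 <= n)%N by apply: leq_trans nK.
(* [n >= K] gives [M n^(-r) <= delta n^(-s)] *)
have Mn : (M / delta <= n%:R `^ (r - s))%R.
  have -> : (M / delta = K `^ (r - s))%R.
    by rewrite /K -powRrM mulVf ?gt_eqF ?subr_gt0 // powRr1 // divr_ge0 // ltW.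
  apply: ge0_ler_powR; rewrite ?nnegrE ?powR_ge0 ?ler0n ?subr_ge0 //; first exact: ltW.
  by apply: ltW; apply: (lt_le_trans (truncnS_gt K)); rewrite ler_nat.
rewrite lee_fin -[X in (n%:R `^ (- X))%R](subrK s r) opprD powR_natD //.
rewrite mulrA ler_wpM2r ?powR_ge0 // powRN -ler_pdivlMr ?invr_gt0 ?powR_gt0 ?ltr0n //.
by rewrite invrK -ler_pdivrMl // mulrC.
Qed.

End StochasticOrder.


Theorem lemmaF3 (R : realType) (dX dY : measure_display)
    (X : measurableType dX) (Y : measurableType dY)
    (HX HY H : lmodType R) (S : @tensor_rkhs R X Y HX HY H)
    (Pcal : set (@dist_model R dX dY X Y)) (eta : R)
    (d : measure_display) (Omega : measurableType d) (Pr : probability Omega R)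
    (Pstar : @dist_model R dX dY X Y)
    (Phat : nat -> Omega -> @dist_model R dX dY X Y)
    (tau gamma1 gamma0 : R) :
  (* standing assumptions: tensor-product RKHS, strong positivity of Pcal *)
  valid_tensor_rkhs S ->
  0 < eta ->
  (forall P, Pcal P -> wf_model P /\ (forall x, eta <= prop P x <= 1 - eta)) ->
  Pcal Pstar ->
  (forall (n : nat) (w : Omega), Pcal (Phat n w)) ->
  (* (i) *)
  0 < tau ->
  bigOp Pr (fun n w =>
    'N[margX Pstar]_(2%:E)[EFin \o (fun x => (prop (Phat n w) x - prop Pstar x)%R)]%E)
    tau ->
  (* (ii) *)
  0 < gamma1 ->
  bigOp Pr (fun n w =>
    'N[margX Pstar]_(2%:E)[EFin \o (fun x =>
       (hnorm (ipH S) (theta S (Phat n w) true x - theta S Pstar true x))%R)]%E)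
    gamma1 ->
  0 < gamma0 ->
  bigOp Pr (fun n w =>
    'N[margX Pstar]_(2%:E)[EFin \o (fun x =>
       (hnorm (ipH S) (theta S (Phat n w) false x - theta S Pstar false x))%R)]%E)
    gamma0 ->
  (* conclusion *)
  bigOp Pr (fun n w => (hnorm (ipH S) (remainder S Pstar (Phat n w)))%:E)
    (tau + Num.min gamma1 gamma0) /\
  (1 / 2 < tau + Num.min gamma1 gamma0 ->
   littleop Pr (fun n w => (hnorm (ipH S) (remainder S Pstar (Phat n w)))%:E)
     (1 / 2)).
Proof.
move=> [[hX hY hH sepH] [dnX dnY] [_ _ ip_tens dnT] [[[CX kX] [CY kY]] mkX mkY _ _]].
move=> eta0 Pcal_ok PS PN _ rate_pi _ rate_theta1 _ rate_theta0.
have [wfS _] := Pcal_ok _ PS.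
have rate : bigOp Pr (fun n w => (hnorm (ipH S) (remainder S Pstar (Phat n w)))%:E)
    (tau + Num.min gamma1 gamma0).
  rewrite addr_minr; apply: (@bigOp_le _ _ _ _ _ _ (eta^-1)); first by rewrite invr_gt0.
    move=> n w; have [wfN boundsN] := Pcal_ok _ (PN n w).
    exact: (hnorm_remainder_le_L2norm hX hY hH dnX dnY dnT ip_tens kX kY mkX mkY sepH
      eta0 wfS wfN boundsN).
  by apply: bigOp_add; apply: bigOp_mul => // n w; exact: Lnorm_ge0.
by split => // half_lt; exact: bigOp_littleop half_lt rate.
Qed.
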